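(* Let $G_1$ be a group and $k\ge1$ an integer such that $|G_1:C_{G_1}(a)|\le k$ for every $a\in G_1$. Let $n,m\ge0$, let $G\le G_1^n$ be a subgroup, let $w(\bar x,\bar y)$ be a group word in the variables $\bar x=(x_1,\dots,x_n)$, $\bar y=(y_1,\dots,y_m)$ and their inverses, and let $\bar g\in G_1^m$, $c\in G_1$. If the set $\{\bar h\in G:w(\bar h,\bar g)=c\}$ is $2k^{n^2+mn}$-large in $G$, then $w(\bar h,\bar g)=c$ for all $\bar h\in G$.
   Context: A subset $X\subseteq G$ is $k$-large in $G$ if the intersection of any $k$ left translates $\bar a_1X\cap\dots\cap\bar a_kX$ ($\bar a_i\in G$) is non-empty. *)

From HB Require Import structures.
From mathcomp Require Import all_boot monoid.
Set Implicit Arguments. Unset Strict Implicit. Unset Printing Implicit Defensive.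
Local Open Scope group_scope.

Definition centralizer (G1 : groupType) (a : G1) : G1 -> Prop :=
  fun x => x * a = a * x.

(* |G1 : H| <= k : the left cosets of H are at most k, i.e. G1 is covered
   by k left cosets t_1 H, ..., t_k H. *)
Definition index_le (G1 : groupType) (H : G1 -> Prop) (k : nat) : Prop :=
  exists t : 'I_k -> G1, forall g : G1, exists i : 'I_k, H ((t i)^-1 * g).

Definition tup (G1 : groupType) (n : nat) := {ffun 'I_n -> G1}.
Definition tmul (G1 : groupType) n (u v : tup G1 n) : tup G1 n :=
  [ffun i => u i * v i].
Definition tinv (G1 : groupType) n (u : tup G1 n) : tup G1 n :=
  [ffun i => (u i)^-1].
Definition tone (G1 : groupType) n : tup G1 n := [ffun _ => 1].

Definition is_subgroup (G1 : groupType) n (G : tup G1 n -> Prop) : Prop :=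
  [/\ G (tone G1 n),
      forall u v, G u -> G v -> G (tmul u v)
    & forall u, G u -> G (tinv u)].

(* X is K-large in G: any K left translates a_1 X, ..., a_K X (a_i in G)
   have a common point. *)
Definition large (G1 : groupType) n (G X : tup G1 n -> Prop) (K : nat) : Prop :=
  forall a : 'I_K -> tup G1 n, (forall i, G (a i)) ->
    exists x : tup G1 n, forall i, X (tmul (tinv (a i)) x).

Inductive gword (n m : nat) : Type :=
  | WX of 'I_n
  | WY of 'I_m
  | WOne
  | WMul of gword n m & gword n m
  | WInv of gword n m.

Fixpoint weval (G1 : groupType) n m (w : gword n m)
    (x : tup G1 n) (y : tup G1 m) : G1 :=
  match w with
  | WX i => x i
  | WY j => y j
  | WOne => 1
  | WMul u v => weval u x y * weval v x y
  | WInv u => (weval u x y)^-1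
  end.

From Stdlib Require Import ClassicalEpsilon.
From HB Require Import structures.
From mathcomp Require Import all_boot monoid.
(* Label every x in G by the left cosets of the centralizers C(h_j), C(g_j)
   containing its coordinates x_i: there are at most k^(n^2+mn) labels.
   Translating X by a representative y_l in G of each label l and by
   y_l h^-1 gives 2k^(n^2+mn) translates; a common point x of them, together
   with the representative y of the label of x, yields u = y^-1 x such that
   u and h u lie in X.  As y and x share their label, every u_i centralizes
   all h_j and g_j, hence w(h u, g) = w(h, g) w(u, 1) and
   w(u, g) = w(1, g) w(u, 1).  Both equal c, so w(h, g) = w(1, g) for every
   h in G, and this common value is c because X is nonempty. *)

Set Implicit Arguments. Unset Strict Implicit. Unset Printing Implicit Defensive.
Local Open Scope group_scope.

Section Words.
Variables (G1 : groupType) (n m : nat).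
Implicit Types (w : gword n m) (h u v : tup G1 n) (g : tup G1 m).

Lemma commute_weval w v g (z : G1) :
  (forall i, commute z (v i)) -> (forall j, commute z (g j)) ->
  commute z (weval w v g).
Proof.
move=> zv zg; elim: w => [i|j| |a IHa b IHb|a IHa] /=.
- exact: zv.
- exact: zg.
- exact: commute1.
- exact: commuteM.
- exact: commuteV.
Qed.

Lemma weval_tmul w u v g :
  (forall i j, commute (u i) (v j)) -> (forall i j, commute (u i) (g j)) ->
  weval w (tmul v u) g = weval w v g * weval w u (tone G1 m).
Proof.
move=> uv ug.
have comm_evals w1 w2 : commute (weval w1 u (tone G1 m)) (weval w2 v g).
  apply: commute_weval => [i|j]; apply: commute_sym; apply: commute_weval.
  - by move=> i'; apply: commute_sym; apply: uv.
  - by move=> j'; rewrite ffunE; apply: commute1.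
  - by move=> i'; apply: commute_sym; apply: ug.
  - by move=> j'; rewrite ffunE; apply: commute1.
elim: w => [i|j| |a IHa b IHb|a IHa] /=.
- by rewrite ffunE.
- by rewrite ffunE mulg1.
- by rewrite mulg1.
- by rewrite IHa IHb -!mulgA (mulgA (weval a u _)) comm_evals !mulgA.
- by rewrite IHa invgM; apply/commute_sym/commuteV/commute_sym/commuteV.
Qed.

Lemma weval_eq_tone_of_centralizing w h u g :
  (forall i j, commute (u i) (h j)) -> (forall i j, commute (u i) (g j)) ->
  weval w (tmul h u) g = weval w u g -> weval w h g = weval w (tone G1 n) g.
Proof.
move=> uh ug.
have eval_u : weval w u g = weval w (tone G1 n) g * weval w u (tone G1 m).
  rewrite -weval_tmul // => [|i j]; last by rewrite ffunE; apply: commute1.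
  by congr weval; apply/ffunP => i; rewrite !ffunE mul1g.
by rewrite weval_tmul // eval_u => /mulIg.
Qed.

End Words.

Section CentralizerLabels.
Variables (G1 : groupType) (k : nat).
Hypothesis hidx : forall a : G1, index_le (centralizer a) k.

Lemma centralizer_coset_label :
  exists f : G1 -> G1 -> 'I_k,
    forall a z z', f a z = f a z' -> commute (z^-1 * z') a.
Proof.
have [t ht] := choice _ hidx.
have [f hf] := choice (fun (p : G1 * G1) i => centralizer p.1 ((t p.1 i)^-1 * p.2))
  (fun p => ht p.1 p.2).
exists (fun a z => f (a, z)) => a z z' same_label.
have cz := hf (a, z); have cz' := hf (a, z'); rewrite /= same_label in cz.
have -> : z^-1 * z' = ((t a (f (a, z')))^-1 * z)^-1 * ((t a (f (a, z')))^-1 * z').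
  by rewrite invgM invgK mulgA mulgK.
apply/commute_sym/commuteM; last exact/commute_sym.
by apply: commuteV; apply/commute_sym.
Qed.

Lemma centralizing_labelling n (B : finType) (e : B -> G1) :
  exists lab : tup G1 n -> {ffun 'I_n * B -> 'I_k},
    forall y x, lab y = lab x -> forall i b, commute (tmul (tinv y) x i) (e b).
Proof.
have [f hf] := centralizer_coset_label.
exists (fun x => [ffun p => f (e p.2) (x p.1)]) => y x /ffunP same_label i b.
rewrite !ffunE; apply: hf.
by have := same_label (i, b); rewrite !ffunE.
Qed.

End CentralizerLabels.

Section Largeness.
Variables (G1 : groupType) (n : nat) (G X : tup G1 n -> Prop).

Lemma large_fintype (I : finType) :
  large G X #|I| -> forall a : I -> tup G1 n, (forall i, G (a i)) ->
  exists x, forall i, X (tmul (tinv (a i)) x).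
Proof.
move=> lX a Ga; have [x hx] := lX (a \o enum_val) (fun i => Ga _).
by exists x => i; rewrite -(enum_rankK i); apply: hx.
Qed.

Lemma large_nonempty K : is_subgroup G -> (0 < K)%N -> large G X K -> exists x, X x.
Proof.
case=> G_one _ _ K_gt0 lX.
have [x hx] := lX (fun _ => tone G1 n) (fun _ => G_one).
by exists (tmul (tinv (tone G1 n)) x); apply: hx (Ordinal K_gt0).
Qed.

Lemma large_same_label_pair (L : finType) (lab : tup G1 n -> L) h :
  is_subgroup G -> (forall x, X x -> G x) -> G h -> large G X (2 * #|L|) ->
  exists y x, [/\ lab y = lab x, X (tmul (tinv y) x) & X (tmul h (tmul (tinv y) x))].
Proof.
case=> G_one G_mul G_inv XG Gh lX.
have [rep rep_spec] : exists rep : L -> tup G1 n,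
    forall l, G (rep l) /\ ((exists x, G x /\ lab x = l) -> lab (rep l) = l).
  apply: (choice (fun l y => G y /\ ((exists x, G x /\ lab x = l) -> lab y = l))) => l.
  case: (classic (exists x, G x /\ lab x = l)) => [[x [Gx <-]]|no_x].
    by exists x.
  by exists (tone G1 n).
pose a (p : bool * L) := if p.1 then tmul (rep p.2) (tinv h) else rep p.2.
have Ga p : G (a p).
  case: p => [[] l]; last exact: (rep_spec l).1.
  by apply: G_mul; [exact: (rep_spec l).1 | exact: G_inv].
have [|x hx] := @large_fintype _ _ a Ga; first by rewrite card_prod card_bool.
have Gx : G x.
  have := G_mul _ _ (Ga (false, lab x)) (XG _ (hx (false, lab x))).
  by congr G; apply/ffunP => i; rewrite !ffunE mulVKg.
exists (rep (lab x)), x; split; first by apply: (rep_spec _).2; exists x.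
- exact: hx (false, lab x).
- by have := hx (true, lab x); congr X; apply/ffunP => i; rewrite !ffunE invgM invgK mulgA.
Qed.

End Largeness.

Theorem theorem3p3 (G1 : groupType) (k : nat) (hk : (1 <= k)%N)
  (hidx : forall a : G1, index_le (centralizer a) k)
  (n m : nat) (G : tup G1 n -> Prop) (hG : is_subgroup G)
  (w : gword n m) (g : tup G1 m) (c : G1)
  (hlarge : large G (fun h => G h /\ weval w h g = c)
                    (2 * k ^ (n ^ 2 + m * n))%N) :
  forall h, G h -> weval w h g = c.
Proof.
have w_const h : G h -> weval w h g = weval w (tone G1 n) g.
  move=> Gh.
  pose e (b : 'I_n + 'I_m) := match b with inl i => h i | inr j => g j end.
  have [lab lab_cent] := centralizing_labelling hidx n e.
  have card_lab : (k ^ (n ^ 2 + m * n) = #|{: {ffun 'I_n * ('I_n + 'I_m) -> 'I_k}}|)%N.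
    by rewrite card_ffun card_prod card_sum !card_ord mulnDr mulnC -mulnn.
  rewrite card_lab in hlarge.
  have [y [x [/lab_cent u_cent [_ Xu] [_ Xhu]]]] :=
    large_same_label_pair lab hG (fun _ => @proj1 _ _) Gh hlarge.
  apply: (weval_eq_tone_of_centralizing (u := tmul (tinv y) x)) => [i j|i j|].
  - exact: u_cent i (inl j).
  - exact: u_cent i (inr j).
  - by rewrite Xhu Xu.
have K_gt0 : (0 < 2 * k ^ (n ^ 2 + m * n))%N by rewrite muln_gt0 expn_gt0 hk.
have [x [Gx <-]] := large_nonempty hG K_gt0 hlarge.
by move=> h Gh; rewrite (w_const h Gh) (w_const x Gx).
Qed.
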